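(* Let $(x_k)_{k\ge0}$ be an arbitrary sequence of numbers (or indeterminates), and define $a_n=x_n$ if $n=2^k-1$ for some integer $k\ge0$ and $a_n=0$ otherwise. Let $d(n)=\det\left(a_{i+j}\right)_{i,j=0}^{n-1}$ with $d(0)=1$, and for $n\ge1$ let $\alpha(n)=2^{\lceil\log_2 n\rceil}-1$ and $\beta(n)=2n-1-\alpha(n)$. Then for all $n\ge1$, $$d(n)=(-1)^{\binom{\beta(n)}{2}}x_{\alpha(n)}^{\beta(n)}\,d(n-\beta(n)).$$ *)

(* entries in an arbitrary commutative ring R
   (covers numbers and indeterminates, e.g. R = {poly ...} or mpoly). *)
From mathcomp Require Import all_boot all_order all_algebra.
Set Implicit Arguments. Unset Strict Implicit. Unset Printing Implicit Defensive.
Import GRing.Theory.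
Local Open Scope ring_scope.

(* n = 2^k - 1 for some integer k >= 0.  Any such k satisfies k <= n
   (since 2^k - 1 >= k), so bounding the witness by n is harmless. *)
Definition is_pow2m1 (n : nat) : bool := [exists k : 'I_n.+1, n == (2 ^ k).-1]%N.

Definition aseq (R : comRingType) (x : nat -> R) (n : nat) : R :=
  if is_pow2m1 n then x n else 0.

Definition hdet (R : comRingType) (x : nat -> R) (n : nat) : R :=
  \det (\matrix_(i < n, j < n) aseq x (i + j)%N).

Definition ceil_log2 (n : nat) : nat := up_log 2 n.

Definition alpha (n : nat) : nat := (2 ^ ceil_log2 n).-1.
Definition beta (n : nat) : nat := (2 * n - 1 - alpha n)%N.

(* Write 2^p < n <= 2^(p+1) as n = k + 2r with k + r = 2^p, and let
   alpha = 2^(p+1) - 1.  In the window [2^p, 2^(p+2) - 1) the only index of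
   the form 2^e - 1 is alpha.  Reversing the last 2r rows (row i >= k is
   replaced by row alpha - i) costs the sign (-1)^C(2r,2) and produces a matrix of
   shape [[H, *, 0], [0, x_alpha I_r, 0], [*, *, x_alpha I_r]], where H is the
   Hankel matrix of size k; its determinant is d(k) x_alpha^(2r). *)

From mathcomp Require Import all_boot all_order all_algebra.
From mathcomp Require Import perm zify.
Set Implicit Arguments. Unset Strict Implicit. Unset Printing Implicit Defensive.
Import GRing.Theory.
Local Open Scope ring_scope.

Definition revn_from (k m i : nat) : nat := if (i < k)%N then i else ((k + m).-1 - i)%N.

Lemma revn_from_ltn k m (i : 'I_m) : (revn_from k m i < m)%N.
Proof. by rewrite /revn_from; case: ifP; have := ltn_ord i; lia. Qed.

Lemma revn_fromK k m i : (i < m)%N -> revn_from k m (revn_from k m i) = i.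
Proof. by rewrite /revn_from; case: ifP; case: ifP; lia. Qed.

Definition rev_from_ord k m (i : 'I_m) : 'I_m := Ordinal (revn_from_ltn k i).

Lemma rev_from_ordK k m : involutive (@rev_from_ord k m).
Proof. by move=> i; apply/val_inj; rewrite /= revn_fromK. Qed.

Definition rev_from_perm k m : 'S_m := perm (can_inj (@rev_from_ordK k m)).

Lemma odd_rev_from_perm k m : odd_perm (rev_from_perm k m) = odd 'C(m - k, 2).
Proof.
(* Both inductions peel off index 0 with lift_perm, whose parity is known. *)
elim: k m => [|k IHk] m.
  elim: m => [|m IHm]; first by rewrite [rev_from_perm _ _]permS0 odd_perm1.
  have -> : rev_from_perm 0 m.+1 = lift_perm ord0 ord_max (rev_from_perm 0 m).
    apply/permP => i; case: (unliftP ord0 i) => [j ->|->]; last first.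
      by rewrite lift_perm_id; apply/val_inj; rewrite permE /= /revn_from /= subn0.
    rewrite lift_perm_lift; apply/val_inj; rewrite !permE /= /bump /revn_from /=.
    by case: j => j /= j_lt; case: leqP; lia.
  by rewrite odd_lift_perm IHm /= !subn0 binS bin1 oddD addbC.
case: m => [|m]; first by rewrite [rev_from_perm _ _]permS0 odd_perm1.
have -> : rev_from_perm k.+1 m.+1 = lift_perm ord0 ord0 (rev_from_perm k m).
  apply/permP => i; case: (unliftP ord0 i) => [j ->|->]; last first.
    by rewrite lift_perm_id; apply/val_inj; rewrite permE /= /revn_from /=.
  rewrite lift_perm_lift; apply/val_inj; rewrite !permE /= /bump /revn_from /=.
  by case: j => j /= j_lt; case: ifP; case: ifP; lia.
by rewrite odd_lift_perm IHk.
Qed.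

Lemma det_row_perm (R : comPzRingType) n (s : 'S_n) (A : 'M[R]_n) :
  \det (row_perm s A) = (-1) ^+ s * \det A.
Proof. by rewrite row_permE det_mulmx det_perm. Qed.

Lemma det_block3 (R : comPzRingType) (g : nat -> nat -> R) k l m :
  (forall i j, (i < k + l)%N -> (k + l <= j < k + l + m)%N -> g i j = 0) ->
  (forall i j, (k <= i < k + l)%N -> (j < k)%N -> g i j = 0) ->
  \det (\matrix_(i < k + l + m, j < k + l + m) g i j) =
    \det (\matrix_(i < k, j < k) g i j)
    * \det (\matrix_(i < l, j < l) g (k + i)%N (k + j)%N)
    * \det (\matrix_(i < m, j < m) g (k + l + i)%N (k + l + j)%N).
Proof.
move=> g_ur g_dl; set A := \matrix_(i, j) g i j.
have A_ur : ursubmx A = 0.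
  apply/matrixP => i j; rewrite !mxE g_ur //=; have := ltn_ord i; have := ltn_ord j; lia.
have A_ul_dl : dlsubmx (ulsubmx A) = 0.
  apply/matrixP => i j; rewrite !mxE g_dl //=; have := ltn_ord i; have := ltn_ord j; lia.
rewrite -[A]submxK A_ur det_lblock -[ulsubmx A]submxK A_ul_dl det_ublock.
by congr (_ * _ * _); congr (\det _); apply/matrixP => i j; rewrite !mxE.
Qed.

Lemma is_pow2m1P m : reflect (exists e, m = (2 ^ e).-1) (is_pow2m1 m).
Proof.
apply: (iffP existsP) => [[e /eqP ->]|[e ->]]; first by exists e.
have e_lt : (e < (2 ^ e).-1.+1)%N by rewrite prednK ?expn_gt0 // ltn_expl.
by exists (Ordinal e_lt).
Qed.

Lemma aseq_pow2m1 (R : comRingType) (x : nat -> R) e : aseq x (2 ^ e).-1 = x (2 ^ e).-1.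
Proof. by rewrite /aseq ifT //; apply/is_pow2m1P; exists e. Qed.

Lemma aseq_pow2_window (R : comRingType) (x : nat -> R) p m :
  (2 ^ p <= m < (2 ^ p.+2).-1)%N -> aseq x m = x (2 ^ p.+1).-1 *+ (m == (2 ^ p.+1).-1).
Proof.
move=> m_in; case: eqVneq => [->|m_ne]; first by rewrite aseq_pow2m1.
rewrite /aseq; case: is_pow2m1P => // -[e m_eq]; exfalso.
have p_lt_e : (p < e)%N by rewrite -(ltn_exp2l _ _ (ltnSn 1)); lia.
have e_lt_pSS : (e < p.+2)%N by rewrite -(ltn_exp2l _ _ (ltnSn 1)); lia.
by move/eqP: m_ne; apply; rewrite m_eq (_ : e = p.+1) //; lia.
Qed.

Lemma hdet_recursion (R : comRingType) (x : nat -> R) p k r : (k + r = 2 ^ p)%N ->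
  hdet x (k + r + r) = (-1) ^+ 'C(r + r, 2) * x (2 ^ p.+1).-1 ^+ (r + r) * hdet x k.
Proof.
move=> kr_eq; set c := x _.
have pow1 : (2 ^ p.+1 = 2 * (k + r))%N by rewrite expnS kr_eq.
have pow2 : (2 ^ p.+2 = 4 * (k + r))%N by rewrite !expnS kr_eq mulnA.
pose g i j := aseq x (revn_from k (k + r + r) i + j).
have g_eq0 i j : (2 ^ p <= revn_from k (k + r + r) i + j < (2 ^ p.+2).-1)%N ->
    revn_from k (k + r + r) i + j != (2 ^ p.+1).-1 -> g i j = 0.
  by move=> ? ne; rewrite /g (aseq_pow2_window x (p := p)) // (negbTE ne) mulr0n.
have g_diag d i j : (k <= d)%N -> (d + r <= k + r + r)%N -> (i < r)%N -> (j < r)%N ->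
    g (d + i)%N (d + j)%N = c *+ (i == j).
  move=> *; rewrite /g (aseq_pow2_window x (p := p)).
    by congr (_ *+ nat_of_bool _); apply/eqP/eqP; rewrite /revn_from; case: ifP; lia.
  by rewrite /revn_from; case: ifP; lia.
have g_scalar d : (k <= d)%N -> (d + r <= k + r + r)%N ->
    \matrix_(i < r, j < r) g (d + i)%N (d + j)%N = c%:M.
  by move=> *; apply/matrixP => i j; rewrite !mxE g_diag.
have sign : (-1) ^+ rev_from_perm k (k + r + r) = (-1) ^+ 'C(r + r, 2) :> R.
  by rewrite odd_rev_from_perm signr_odd (_ : k + r + r - k = r + r)%N //; lia.
rewrite /hdet.
have -> : \matrix_(i < k + r + r, j < k + r + r) aseq x (i + j)
          = row_perm (rev_from_perm k (k + r + r)) (\matrix_(i, j) g i j).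
  by apply/matrixP => i j; rewrite !mxE permE /= /g revn_fromK.
rewrite det_row_perm sign det_block3 ?g_scalar ?det_scalar; try lia.
- have -> : \matrix_(i < k, j < k) g i j = \matrix_(i, j) aseq x (i + j).
    by apply/matrixP => i j; rewrite !mxE /g /revn_from ltn_ord.
  by rewrite exprD -[RHS]mulrA -[_ * c ^+ r * _]mulrA [_ * (_ * _)]mulrC.
- by move=> i j i_lt j_in; apply: g_eq0; rewrite /revn_from; case: ifP; lia.
- by move=> i j i_in j_lt; apply: g_eq0; rewrite /revn_from; case: ifP; lia.
Qed.

Lemma ceil_log2_bounds n : (1 < n)%N ->
  exists p, [/\ ceil_log2 n = p.+1, (2 ^ p < n)%N & (n <= 2 ^ p.+1)%N].
Proof.
move=> n_gt1; exists (ceil_log2 n).-1.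
have e_gt0 : (0 < ceil_log2 n)%N by rewrite up_log_gt0 n_gt1.
by rewrite prednK //; split => //; [exact: up_log_gtn | exact: up_logP].
Qed.

Theorem theorem4p1 (R : comRingType) (x : nat -> R) (n : nat) :
  (1 <= n)%N ->
  hdet x n = (-1) ^+ 'C(beta n, 2) * x (alpha n) ^+ beta n * hdet x (n - beta n).
Proof.
move=> n_gt0; have [n_gt1|n_le1] := ltnP 1 n; last first.
  have -> : n = 1%N by lia.
  rewrite /hdet /beta /alpha /ceil_log2 up_log1 det_mx11 det_mx00 mxE.
  by rewrite mulr1 mul1r expr1 (aseq_pow2m1 x 0).
have [p [log_n lo hi]] := ceil_log2_bounds n_gt1.
rewrite /beta /alpha log_n.
have [k [r [kr_eq ->]]] : exists k r, (k + r = 2 ^ p /\ n = k + r + r)%N.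
  by exists (2 ^ p - (n - 2 ^ p))%N, (n - 2 ^ p)%N; rewrite expnS in hi; lia.
have -> : (2 * (k + r + r) - 1 - (2 ^ p.+1).-1 = r + r)%N by rewrite expnS -kr_eq; lia.
rewrite (_ : k + r + r - (r + r) = k)%N; last lia.
exact: hdet_recursion.
Qed.
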